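(* Let $n\ge2$ be even, and let $K=\langle A,B,T\rangle$ be a Kleinian group obtained as in case (a). Then the subgroup $$\Gamma=\langle A^{j}TA^{-j}: j=0,1,\dots,n-1\rangle$$ is a Schottky group of rank $n$ and has index $2n$ in $K$. It is not a normal subgroup of $K$.
   Context: Case (a): $A(z)=e^{2\pi i/n}z$ and $B(z)=1/z$ generate the dihedral group $D_n$ of order $2n$. $T$ is a loxodromic Möbius transformation with $TBT^{-1}=AB$. $K=\langle A,B,T\rangle$ is obtained as an HNN-extension of $D_n$ by $\langle T\rangle$ via the Klein–Maskit combination theorem. This means there exist closed discs $D_1,D_2\subset\widehat{\mathbb C}$ with boundary loops $\delta_1,\delta_2$ such that: - $h(D_1)\cap D_2=\emptyset$ for all $h\in D_n$; - $D_1$ is precisely invariant under $\langle B\rangle$ in $D_n$, i.e. $h(D_1)=D_1$ for $h\in\langle B\rangle$ and $h(D_1)\cap D_1=\emptyset$ for all other $h\in D_n$; - $D_2$ is precisely invariant under $\langle AB\rangle$ in $D_n$, defined in the same way; - $T(\delta_1)=\delta_2$ and $T$ maps the exterior of $D_1$ onto the interior of $D_2$. A Schottky group of rank $g$ is a Kleinian group generated by loxodromic transformations $A_1,\dots,A_g$ for which there exist $2g$ pairwise disjoint simple loops $\alpha_1,\alpha_1',\dots,\alpha_g,\alpha_g'$ with a common exterior domain $D$ such that $A_i(\alpha_i)=\alpha_i'$ and $A_i(D)\cap D=\emptyset$ for each $i$. *)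

From HB Require Import structures.
From mathcomp Require Import all_boot all_order all_algebra.
From mathcomp Require Import all_classical all_reals all_analysis.
From mathcomp Require Import complex.
Set Implicit Arguments. Unset Strict Implicit. Unset Printing Implicit Defensive.
Import Order.TTheory GRing.Theory Num.Theory.
Import numFieldNormedType.Exports.
Local Open Scope classical_set_scope.
Local Open Scope ring_scope.

Section Defs.
Variable R : realType.
Local Notation C := (R[i]).

(* The Riemann sphere: [Some z] is the finite point z, [None] is infinity. *)
Definition sphere := option C.

Definition mob (a b c d : C) (z : sphere) : sphere :=
  match z with
  | Some w => if c * w + d == 0 then None else Some ((a * w + b) / (c * w + d))
  | None => if c == 0 then None else Some (a / c)
  end.

Definition is_mobius (f : sphere -> sphere) : Prop :=
  exists a b c d : C, a * d - b * c != 0 /\ f = mob a b c d.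

Definition loxodromic (f : sphere -> sphere) : Prop :=
  exists a b c d : C, a * d - b * c = 1 /\ f = mob a b c d /\
    ~ (exists t : R, 0 <= t <= 4 /\ (a + d) ^+ 2 = Complex t 0).

Definition sqmod (z : C) : R := complex.Re z ^+ 2 + complex.Im z ^+ 2.

(* Discreteness in PSL(2,C): the identity is isolated. *)
Definition discrete_group (G : set (sphere -> sphere)) : Prop :=
  exists eps : R, 0 < eps /\
    forall g a b c d, G g -> a * d - b * c = 1 -> g = mob a b c d ->
      sqmod (a - 1) < eps -> sqmod b < eps -> sqmod c < eps ->
      sqmod (d - 1) < eps -> g = id.

Definition kleinian (G : set (sphere -> sphere)) : Prop :=
  (forall g, G g -> is_mobius g) /\ discrete_group G.

Definition group_closed (S : set (sphere -> sphere)) : Prop :=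
  S id /\ (forall f g, S f -> S g -> S (f \o g)) /\
  (forall f g, S f -> g \o f = id -> f \o g = id -> S g).

Definition gen (X : set (sphere -> sphere)) : set (sphere -> sphere) :=
  fun f => forall S, X `<=` S -> group_closed S -> S f.

Definition has_index (G H : set (sphere -> sphere)) (m : nat) : Prop :=
  exists r : 'I_m -> (sphere -> sphere), (forall i, G (r i)) /\
    forall k, G k -> exists! i : 'I_m, exists h, H h /\ k = r i \o h.

Definition normal_in (G H : set (sphere -> sphere)) : Prop :=
  forall k g, G k -> H g -> exists g', H g' /\ k \o g = g' \o k.

(* Topology of the sphere through the stereographic embedding into R^3. *)
Definition stereo (z : sphere) : R * R * R :=
  match z with
  | Some w => let s := sqmod w in
      (2 * complex.Re w / (1 + s), 2 * complex.Im w / (1 + s), (s - 1) / (s + 1))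
  | None => (0, 0, 1)
  end.

Definition cdisk : set (R * R) := [set p | p.1 ^+ 2 + p.2 ^+ 2 <= 1].
Definition odisk : set (R * R) := [set p | p.1 ^+ 2 + p.2 ^+ 2 < 1].
Definition circle : set (R * R) := [set p | p.1 ^+ 2 + p.2 ^+ 2 = 1].

(* h parametrises a closed topological disc in the sphere: a continuous
   injection of the closed unit disc (hence a homeomorphism onto its image). *)
Definition disc_param (h : R * R -> sphere) : Prop :=
  {within cdisk, continuous (stereo \o h)} /\ {in cdisk &, injective h}.

Definition disc_of (h : R * R -> sphere) := h @` cdisk.
Definition disc_interior (h : R * R -> sphere) := h @` odisk.
Definition disc_boundary (h : R * R -> sphere) := h @` circle.

Definition precisely_invariant (D : set sphere) (J G : set (sphere -> sphere)) :=
  (forall h, J h -> h @` D = D) /\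
  (forall h, G h -> ~ J h -> h @` D `&` D = set0).

(* Schottky group of rank g (loops realised as boundaries of pairwise disjoint
   closed discs; D the common exterior domain). *)
Definition schottky (G : set (sphere -> sphere)) (g : nat) : Prop :=
  kleinian G /\
  exists (Ag : 'I_g -> (sphere -> sphere)) (h h' : 'I_g -> (R * R -> sphere)),
    G = gen (fun f => exists i, f = Ag i) /\
    (forall i, loxodromic (Ag i)) /\
    (forall i, disc_param (h i) /\ disc_param (h' i)) /\
    (forall i j, i != j -> disc_of (h i) `&` disc_of (h j) = set0) /\
    (forall i j, i != j -> disc_of (h' i) `&` disc_of (h' j) = set0) /\
    (forall i j, disc_of (h i) `&` disc_of (h' j) = set0) /\
    let D := ~` (\bigcup_i (disc_of (h i) `|` disc_of (h' i))) in
    (forall i, Ag i @` disc_boundary (h i) = disc_boundary (h' i)) /\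
    (forall i, Ag i @` D `&` D = set0).

Definition rotm (theta : R) : sphere -> sphere :=
  mob (Complex (cos theta) (sin theta)) 0 0 1.

Definition invz : sphere -> sphere := mob 0 1 1 0.

End Defs.
Arguments invz {R}.

(* Write n = m + 2 and g_j = A^j T A^-j, so that Gamma = <g_0, ..., g_(n-1)>.
   1. Ping-pong.  The 2n discs A^j D1, A^j D2 (j < n) are pairwise disjoint
      and g_j maps the complement of A^j D1 into A^j D2.  Hence a nonempty
      reduced word in the g_j^(+-1) maps infinity and 0 (the two fixed points
      of A, which lie in no disc) into a disc; so every word of Gamma fixing
      infinity, or sending it to 0, is the identity.
   2. Normal form.  The relation T B = A B T lets the dihedral elements A^k
      and A^k B move to the left of the letters, so every element of K is
      d o g with d in D_n and g in Gamma.
   3. Hence the 2n elements of D_n are coset representatives of Gamma in K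
      (uniqueness by 1), and Gamma is not normal since B T B^-1 = A^-1 T would
      make A^-1 a word of Gamma fixing infinity.
   4. Schottky structure: the discs of 1 are images of the given parametrised
      discs under rotations, which preserve parametrisations; each g_j is a
      conjugate of T by a rotation, hence loxodromic; discreteness is
      inherited from K. *)
From Pilot Require Import Defs.
From HB Require Import structures.
From mathcomp Require Import all_boot all_order all_algebra.
From mathcomp Require Import all_classical all_reals all_analysis.
From mathcomp Require Import complex.
From mathcomp Require Import ring lra zify.
Set Implicit Arguments. Unset Strict Implicit. Unset Printing Implicit Defensive.
Import Order.TTheory GRing.Theory Num.Theory.
Import numFieldNormedType.Exports.
Local Open Scope classical_set_scope.
Local Open Scope ring_scope.
Local Notation group_closed := Pilot.Defs.group_closed.
Arguments invz : simpl never.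

Section GeneratedGroups.
Variable R : realType.
Local Notation S := (sphere R).

Lemma gen_group (X : set (S -> S)) : group_closed (gen X).
Proof.
split; first by move=> Y _ [].
split.
  move=> f g hf hg Y XY gY; have [_ [hc _]] := gY.
  by apply: hc; [apply: hf | apply: hg].
move=> f g hf gf fg Y XY gY; have [_ [_ hi]] := gY.
by apply: (hi f) => //; apply: hf.
Qed.

Lemma gen_min (X Y : set (S -> S)) : X `<=` Y -> group_closed Y -> gen X `<=` Y.
Proof. by move=> XY gY f hf; apply: hf. Qed.

Lemma gen_in (X : set (S -> S)) : X `<=` gen X.
Proof. by move=> f Xf Y XY _; apply: XY. Qed.

Lemma involution_group (F : S -> S) :
  (forall x, F (F x) = x) -> group_closed (fun f => f = id \/ f = F).
Proof.
move=> FF; split; first by left.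
split.
  move=> f g [->|->] [->|->]; [left|right|right|left] => //.
  by apply: funext => x /=.
move=> f g [->|->] gf fg.
  by left; apply: funext => x; have := congr1 (fun h => h x) gf.
right; apply: funext => x; rewrite -[in LHS](FF x).
by have := congr1 (fun h => h (F x)) gf.
Qed.

Lemma kleinian_sub (G H : set (S -> S)) : H `<=` G -> kleinian G -> kleinian H.
Proof.
move=> HG [Gmob [eps [eps0 Gdisc]]]; split; first by move=> g Hg; apply: Gmob; apply: HG.
by exists eps; split => // g a b c d /HG; apply: Gdisc.
Qed.

End GeneratedGroups.

Section Moebius.
Variable R : realType.
Local Notation C := (R[i]).
Local Notation S := (sphere R).

(* The rotation (more generally, homothety) z |-> u z. *)
Definition rot (u : C) : S -> S := mob u 0 0 1.
Arguments rot : simpl never.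

Lemma rotE u z : rot u (Some z) = Some (u * z).
Proof. by rewrite /rot /= mul0r add0r oner_eq0 addr0 divr1. Qed.

Lemma rot_infty u : rot u None = None.
Proof. by rewrite /rot /= eqxx. Qed.

Lemma rotM u v : rot u \o rot v = rot (u * v).
Proof. by apply: funext => -[z|] /=; rewrite ?rotE ?rot_infty ?mulrA. Qed.

Lemma rot1 : rot 1 = id.
Proof. by apply: funext => -[z|] /=; rewrite ?rotE ?rot_infty ?mul1r. Qed.

Lemma rot_inj u : u != 0 -> injective (rot u).
Proof.
move=> u0 x y /(congr1 (rot u^-1)).
by rewrite -![rot u^-1 (rot u _)]/((rot u^-1 \o rot u) _) rotM mulVf // rot1.
Qed.

Lemma iter_rot u j : iter j (rot u) = rot (u ^+ j).
Proof.
apply: funext => x; elim: j => [|j IH] /=; first by rewrite expr0 rot1.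
by rewrite IH -[X in X = _]/((rot u \o rot (u ^+ j)) x) rotM exprS.
Qed.

Lemma invzE z : invz (Some z) = if z == 0 then None else Some z^-1 :> S.
Proof. by rewrite /invz /= mul1r addr0 mul0r add0r div1r. Qed.

Lemma invz_infty : invz None = Some 0 :> S.
Proof. by rewrite /invz /= oner_eq0 mul0r. Qed.

Lemma invzK (x : S) : invz (invz x) = x.
Proof.
case: x => [z|]; last by rewrite invz_infty invzE eqxx.
rewrite invzE; case: eqP => [->|/eqP z0]; first by rewrite invz_infty.
by rewrite invzE invr_eq0 (negPf z0) invrK.
Qed.

Lemma invz_rot u (x : S) : u != 0 -> invz (rot u x) = rot u^-1 (invz x).
Proof.
move=> u0; case: x => [z|]; last by rewrite rot_infty invz_infty rotE mulr0.
rewrite rotE !invzE mulf_eq0 (negPf u0) /=.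
case: eqP => z0; rewrite ?rot_infty // rotE invrM ?unitfE //; first by rewrite mulrC.
by apply/eqP.
Qed.

(* The adjugate matrix gives the inverse Moebius map. *)
Lemma mob_inv (a b c d : C) :
  a * d - b * c != 0 -> mob a b c d \o mob d (- b) (- c) a = id.
Proof.
move=> det; apply: funext => -[z|] /=.
  case: eqP => [h|/eqP h] /=.
    case: eqP => [c0|/eqP c0].
      move: det h; rewrite c0 oppr0 mul0r add0r mulr0 subr0 => /[swap] ->.
      by rewrite mul0r eqxx.
    congr Some; have ->: a = c * z.
      by apply/eqP; rewrite -subr_eq0; apply/eqP; rewrite -h; ring.
    by field.
  have e : c * ((d * z + - b) / (- c * z + a)) + d = (a * d - b * c) / (- c * z + a).
    by field.
  rewrite e mulf_eq0 invr_eq0 (negPf det) (negPf h) /=; congr Some.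
  by field; rewrite h det.
case: eqP => [c0|/eqP c0] /=.
  by rewrite (_ : c = 0) ?eqxx // -(opprK c) c0 oppr0.
have c0' : c != 0 by rewrite -oppr_eq0.
have -> : c * (d / - c) + d = 0 by field.
by rewrite eqxx.
Qed.

Lemma loxodromic_inverse (f : S -> S) :
  loxodromic f -> exists2 g, (forall x, f (g x) = x) & (forall x, g (f x) = x).
Proof.
move=> [a [b [c [d [det [-> _]]]]]].
have det0 : a * d - b * c != 0 by rewrite det oner_neq0.
have det' : d * a - - b * - c = a * d - b * c by rewrite mulrNN [d * a]mulrC.
exists (mob d (- b) (- c) a) => x.
  exact: (congr1 (fun h => h x) (mob_inv det0)).
have det1 : d * a - - b * - c != 0 by rewrite det'.
by have := congr1 (fun h => h x) (mob_inv det1); rewrite !opprK.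
Qed.

Lemma rot_mob_rot (u v a b c d : C) :
  u * v = 1 -> rot u \o mob a b c d \o rot v = mob a (b * u) (c * v) d.
Proof.
move=> uv; have u0 : u != 0.
  by apply/eqP => u0; move: uv; rewrite u0 mul0r => /eqP; rewrite eq_sym oner_eq0.
have -> : v = u^-1 by apply: (mulfI u0); rewrite uv divff.
apply: funext => -[z|] /=.
  rewrite rotE /= mulrA.
  case: eqP => [h|/eqP h]; first by rewrite rot_infty.
  rewrite rotE; congr Some.
  have e : c / u * z + d = (c * z + d * u) / u by field.
  rewrite e mulf_eq0 invr_eq0 (negPf u0) orbF in h.
  by field; rewrite u0 h.
rewrite rot_infty /= mulf_eq0 invr_eq0 (negPf u0) orbF.
case: eqP => [c0|/eqP c0]; first by rewrite rot_infty.
by rewrite rotE; congr Some; field; rewrite u0 c0.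
Qed.

(* Conjugates of a loxodromic map by rotations are loxodromic (same trace). *)
Lemma loxodromic_rot_conj (u v : C) (f : S -> S) :
  u * v = 1 -> loxodromic f -> loxodromic (rot u \o f \o rot v).
Proof.
move=> uv [a [b [c [d [det [-> ntr]]]]]].
exists a, (b * u), (c * v), d; split; last by rewrite rot_mob_rot.
by rewrite -det mulrACA uv mulr1.
Qed.

End Moebius.
Arguments rot : simpl never.

Section CyclicRotations.
Variable R : realType.
Local Notation C := (R[i]).
Local Notation S := (sphere R).
Variables (m : nat) (w : C).
Local Notation n := m.+2.
Hypothesis w_order : w ^+ n = 1.
Hypothesis w_pow_inj : forall a b, (a < n)%N -> (b < n)%N -> w ^+ a = w ^+ b -> a = b.

Lemma root_neq0 : w != 0.
Proof.
by apply/eqP => w0; move: w_order; rewrite w0 expr0n /= => /eqP; rewrite eq_sym oner_eq0.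
Qed.

Lemma expw_mod q r : w ^+ (q * n + r) = w ^+ r.
Proof. by rewrite exprD mulnC exprM w_order expr1n mul1r. Qed.

Lemma expw_modn a : w ^+ a = w ^+ (a %% n)%N.
Proof. by rewrite {1}(divn_eq a n) expw_mod. Qed.

(* Apow k is A^k : z |-> w^k z; the exponent m.+1 * k represents -k mod n. *)
Definition Apow k : S -> S := rot (w ^+ k).

Lemma ApowD a b x : Apow a (Apow b x) = Apow (a + b) x.
Proof. by rewrite /Apow exprD -rotM. Qed.

Lemma Apow0 x : Apow 0 x = x.
Proof. by rewrite /Apow expr0 rot1. Qed.

Lemma Apow_eq a b x : w ^+ a = w ^+ b -> Apow a x = Apow b x.
Proof. by rewrite /Apow => ->. Qed.

Lemma ApowK k x : Apow k (Apow (m.+1 * k) x) = x.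
Proof.
rewrite ApowD -[x in _ = x]Apow0; apply: Apow_eq.
by rewrite (_ : (k + m.+1 * k = k * n + 0)%N) ?expw_mod //; lia.
Qed.

Lemma ApowVK k x : Apow (m.+1 * k) (Apow k x) = x.
Proof. by rewrite ApowD addnC -ApowD ApowK. Qed.

Lemma expw_oppK k : w ^+ (m.+1 * (m.+1 * k)) = w ^+ k.
Proof. by rewrite (_ : (m.+1 * (m.+1 * k) = (m * k) * n + k)%N) ?expw_mod //; nia. Qed.

Lemma ApowE k z : Apow k (Some z) = Some (w ^+ k * z).
Proof. exact: rotE. Qed.

Lemma Apow_infty k : Apow k None = None.
Proof. exact: rot_infty. Qed.

Lemma Apow_zero k : Apow k (Some 0) = Some 0.
Proof. by rewrite ApowE mulr0. Qed.

Lemma Apow_id k : Apow k = id -> w ^+ k = 1.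
Proof. by move/(congr1 (fun f => f (Some 1))); rewrite ApowE mulr1 => -[]. Qed.

Lemma invz_Apow k x : invz (Apow k x) = Apow (m.+1 * k) (invz x).
Proof.
have wk : w ^+ k != 0 by rewrite expf_eq0 (negPf root_neq0) andbF.
rewrite /Apow invz_rot //; congr (rot _ _).
apply: (mulfI wk); rewrite divff // -exprD.
by rewrite (_ : (k + m.+1 * k = k * n + 0)%N) ?expw_mod //; lia.
Qed.

Lemma Apow_infty_inv k x : Apow k x = None -> x = None.
Proof. by case: x => // z; rewrite ApowE. Qed.

Lemma Apow_zero_inv k x : Apow k x = Some 0 -> x = Some 0.
Proof.
case: x => [z|]; last by rewrite Apow_infty.
rewrite ApowE => -[] /eqP; rewrite mulf_eq0 expf_eq0 (negPf root_neq0) andbF /=.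
by move/eqP => ->.
Qed.

Lemma Apow1_neq_id : Apow 1 <> id.
Proof. by move/Apow_id => h; have := w_pow_inj (a:=1) (b:=0) isT isT; rewrite expr0 h => /(_ erefl). Qed.

End CyclicRotations.
Arguments Apow : simpl never.

Section Words.
Variable R : realType.
Local Notation C := (R[i]).
Local Notation S := (sphere R).
Variables (m : nat) (w : C).
Local Notation n := m.+2.
Hypothesis w_order : w ^+ n = 1.
Variables T Ti : S -> S.
Hypothesis TTi : forall x, T (Ti x) = x.
Hypothesis TiT : forall x, Ti (T x) = x.

(* The letter (j, true) denotes g_j = A^j T A^-j and (j, false) its inverse. *)
Definition letter (l : nat * bool) : S -> S :=
  Apow w l.1 \o (if l.2 then T else Ti) \o Apow w (m.+1 * l.1).

Lemma letterE j b x :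
  letter (j, b) x = Apow w j ((if b then T else Ti) (Apow w (m.+1 * j) x)).
Proof. by []. Qed.

Definition letter_inv (l : nat * bool) := (l.1, ~~ l.2).

Lemma letter_invK l : letter_inv (letter_inv l) = l.
Proof. by case: l => j b; rewrite /letter_inv /= negbK. Qed.

Lemma letterK l x : letter l (letter (letter_inv l) x) = x.
Proof.
case: l => j b; rewrite /letter /letter_inv /= (ApowVK w_order).
by case: b => /=; rewrite ?TTi ?TiT (ApowK w_order).
Qed.

Definition letter_mod (l : nat * bool) := ((l.1 %% n)%N, l.2).

Lemma letter_modE l x : letter (letter_mod l) x = letter l x.
Proof.
case: l => j b; rewrite /letter /letter_mod /=.
have e1 : w ^+ (j %% n)%N = w ^+ j by rewrite -expw_modn.
have e2 : w ^+ (m.+1 * (j %% n))%N = w ^+ (m.+1 * j).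
  by rewrite (expw_modn w_order) [RHS](expw_modn w_order) modnMmr.
by rewrite /Apow e1 e2.
Qed.

Fixpoint word (s : seq (nat * bool)) : S -> S :=
  if s is l :: s' then letter l \o word s' else id.

Lemma word_cat s1 s2 x : word (s1 ++ s2) x = word s1 (word s2 x).
Proof. by elim: s1 => //= l s IH; rewrite IH. Qed.

Definition word_inv s := rev (map letter_inv s).

Lemma wordK s x : word s (word (word_inv s) x) = x.
Proof.
elim: s x => //= l s IH x.
by rewrite /word_inv map_cons rev_cons -cats1 word_cat -/(word_inv s) IH /= letterK.
Qed.

Lemma word_mod s x : word (map letter_mod s) x = word s x.
Proof. by elim: s x => //= l s IH x; rewrite letter_modE IH. Qed.

Fixpoint reduce (s : seq (nat * bool)) : seq (nat * bool) :=
  match s with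
  | [::] => [::]
  | l :: s' => match reduce s' with
               | k :: r => if k == letter_inv l then r else l :: k :: r
               | [::] => [:: l]
               end
  end.

Fixpoint reduced (s : seq (nat * bool)) : bool :=
  match s with
  | l :: ((k :: _) as s') => (k != letter_inv l) && reduced s'
  | _ => true
  end.

Lemma word_reduce s x : word (reduce s) x = word s x.
Proof.
elim: s x => //= l s IH x; rewrite -IH.
case: (reduce s) => [|k r] //=.
by case: eqP => [->|] //=; rewrite letterK.
Qed.

Lemma reduced_tail l s : reduced (l :: s) -> reduced s.
Proof. by case: s => // k s /= /andP[]. Qed.

Lemma reduced_reduce s : reduced (reduce s).
Proof.
elim: s => //= l s IH.
case E: (reduce s) IH => [|k r] //= IH.
case: eqP => [_|/eqP ne] /=; first exact: reduced_tail IH.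
by rewrite ne IH.
Qed.

Lemma all_reduce (P : pred (nat * bool)) s : all P s -> all P (reduce s).
Proof.
elim: s => //= l s IH /andP[Pl /IH].
case: (reduce s) => [|k r] /=; first by rewrite Pl.
by case: eqP => _ /= /andP[Pk Pr]; rewrite /= ?Pl ?Pk ?Pr.
Qed.

Lemma word_normal s : exists2 s', reduced s' && all (fun l => (l.1 < n)%N) s' &
  forall x, word s x = word s' x.
Proof.
exists (reduce (map letter_mod s)); last by move=> x; rewrite word_reduce word_mod.
rewrite reduced_reduce all_reduce //.
by apply/allP => l /mapP[l' _ ->]; rewrite /letter_mod /= ltn_pmod.
Qed.

End Words.
Arguments letter : simpl never.

Section PingPong.
Variable R : realType.
Local Notation C := (R[i]).
Local Notation S := (sphere R).
Variables (m : nat) (w : C).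
Local Notation n := m.+2.
Hypothesis w_order : w ^+ n = 1.
Hypothesis w_pow_inj : forall a b, (a < n)%N -> (b < n)%N -> w ^+ a = w ^+ b -> a = b.
Variables T Ti : S -> S.
Hypothesis TTi : forall x, T (Ti x) = x.
Hypothesis TiT : forall x, Ti (T x) = x.
Local Notation letter := (letter m w T Ti).
Local Notation word := (word m w T Ti).

Variables D1 D2 : set S.
Hypothesis D1_free : forall k, Apow w k <> id -> Apow w k @` D1 `&` D1 = set0.
Hypothesis D2_free : forall k, Apow w k <> id -> Apow w k @` D2 `&` D2 = set0.
Hypothesis D12_disjoint : forall k, Apow w k @` D1 `&` D2 = set0.
Hypothesis T_into_D2 : forall y, ~ D1 y -> D2 (T y).

(* A^j D2 is the attracting disc of g_j, and A^j D1 that of g_j^-1. *)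
Definition letter_disc (l : nat * bool) : set S :=
  Apow w l.1 @` (if l.2 then D2 else D1).

Lemma free_disc_index (D : set S) :
  (forall k, Apow w k <> id -> Apow w k @` D `&` D = set0) ->
  forall a b y y', (a < n)%N -> (b < n)%N -> D y -> D y' ->
  Apow w a y = Apow w b y' -> a = b.
Proof.
move=> Dfree a b y y' an bn Dy Dy' e.
case: (eqVneq a b) => // ab; exfalso.
have ey : y = Apow w (m.+1 * a + b) y' by rewrite -ApowD -e (ApowVK w_order).
have nid : Apow w (m.+1 * a + b) <> id.
  move=> /Apow_id h; move/eqP: ab; apply; apply: w_pow_inj => //.
  rewrite -[w ^+ a]mulr1 -h -exprD addnA.
  by rewrite (_ : (a + m.+1 * a + b = a * n + b)%N) ?(expw_mod w_order) //; lia.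
have H : (Apow w (m.+1 * a + b) @` D `&` D) y by split => //; exists y'.
by rewrite Dfree in H.
Qed.

Lemma D12_translates_disjoint a b y y' : D1 y -> D2 y' -> Apow w a y <> Apow w b y'.
Proof.
move=> Dy Dy' e.
have ey : y' = Apow w (m.+1 * b + a) y by rewrite -ApowD e (ApowVK w_order).
have H : (Apow w (m.+1 * b + a) @` D1 `&` D2) y' by split => //; exists y.
by rewrite D12_disjoint in H.
Qed.

Lemma letter_into_disc l x : ~ letter_disc (letter_inv l) x -> letter_disc l (letter l x).
Proof.
case: l => j b; rewrite /letter_disc /letter_inv letterE /=.
set y := Apow w (m.+1 * j) x => hx.
have {hx} hy : ~ (if ~~ b then D2 else D1) y.
  by move=> Dy; apply: hx; exists y => //; rewrite /y (ApowK w_order).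
exists ((if b then T else Ti) y) => //.
case: b hy => /= hy; first exact: T_into_D2.
by case: (pselect (D1 (Ti y))) => // nD; exfalso; apply: hy; rewrite -(TTi y); apply: T_into_D2.
Qed.

Lemma letter_disc_disjoint l l' x : (l.1 < n)%N -> (l'.1 < n)%N ->
  letter_disc l x -> letter_disc l' x -> l = l'.
Proof.
case: l l' => [j b] [j' b'] /= hj hj'; rewrite /letter_disc /= => -[y Dy <-] [y' Dy' e].
case: b b' Dy Dy' e => [] [] /= Dy Dy' e.
- by rewrite (free_disc_index D2_free hj' hj Dy' Dy e).
- by exfalso; apply: (D12_translates_disjoint Dy' Dy e).
- by exfalso; apply: (D12_translates_disjoint Dy Dy' (esym e)).
- by rewrite (free_disc_index D1_free hj' hj Dy' Dy e).
Qed.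

Lemma A_fixpoint_notin (D : set S) p :
  (forall k, Apow w k <> id -> Apow w k @` D `&` D = set0) -> Apow w 1 p = p -> ~ D p.
Proof.
move=> Dfree fp Dp; have H : (Apow w 1 @` D `&` D) p by split => //; exists p.
by rewrite (Dfree 1%N (Apow1_neq_id w_pow_inj)) in H.
Qed.

Lemma infty_notin_disc l : ~ letter_disc l None.
Proof.
case: l => j b; rewrite /letter_disc /= => -[y Dy /Apow_infty_inv ey]; move: Dy; rewrite ey.
by case: b; apply: A_fixpoint_notin; rewrite ?Apow_infty.
Qed.

Lemma zero_notin_disc l : ~ letter_disc l (Some 0).
Proof.
case: l => j b; rewrite /letter_disc /= => -[y Dy /(Apow_zero_inv w_order) ey]; move: Dy; rewrite ey.
by case: b; apply: A_fixpoint_notin; rewrite ?Apow_zero.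
Qed.

Lemma reduced_word_into_disc s : reduced s -> all (fun l => (l.1 < n)%N) s ->
  forall l s' x, s = l :: s' -> (forall l, (l.1 < n)%N -> ~ letter_disc l x) ->
  letter_disc l (word s x).
Proof.
elim: s => // l0 s IH red0 all0 l s' x [<- _] hx /=.
case/andP: all0 => l0n all0.
case E: s IH red0 all0 => [|k r] IH red0 all0 /=; first by apply: letter_into_disc; apply: hx.
have Dk := IH (reduced_tail red0) all0 k r x erefl hx.
apply: letter_into_disc => Dl.
case/andP: all0 => kn _; move: red0 => /= /andP[/eqP ne _].
exact: ne (@letter_disc_disjoint k (letter_inv l0) _ kn l0n Dk Dl).
Qed.

Lemma word_trivial s : word s None = None \/ word s None = Some 0 -> forall x, word s x = x.
Proof.
move=> h x; have [s' /andP[red' all'] E] := word_normal w_order TTi TiT s.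
case E' : s' red' all' => [|l r] red' all'; first by rewrite E E'.
exfalso; have := reduced_word_into_disc red' all' erefl (fun l _ => @infty_notin_disc l).
by rewrite -E' -E; case: h => ->; [apply: infty_notin_disc | apply: zero_notin_disc].
Qed.

End PingPong.

Section NormalForm.
Variable R : realType.
Local Notation C := (R[i]).
Local Notation S := (sphere R).
Variables (m : nat) (w : C).
Local Notation n := m.+2.
Hypothesis w_order : w ^+ n = 1.
Variables T Ti : S -> S.
Hypothesis TTi : forall x, T (Ti x) = x.
Hypothesis TiT : forall x, Ti (T x) = x.
Hypothesis T_invz : forall x, T (invz x) = Apow w 1 (invz (T x)).
Local Notation letter := (letter m w T Ti).
Local Notation word := (word m w T Ti).

Definition dihedral (d : S -> S) : Prop :=
  exists k (b : bool), d = Apow w k \o (if b then invz else id).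

Lemma dihedral_id : dihedral id.
Proof. by exists 0%N, false; apply: funext => x /=; rewrite Apow0. Qed.

Lemma dihedral_comp d1 d2 : dihedral d1 -> dihedral d2 -> dihedral (d1 \o d2).
Proof.
move=> [a [b ->]] [c [e ->]]; case: b.
  exists (a + m.+1 * c)%N, (~~ e); apply: funext => x /=.
  by case: e => /=; rewrite (invz_Apow w_order) ApowD // invzK.
by exists (a + c)%N, e; apply: funext => x /=; rewrite ApowD.
Qed.

Lemma dihedral_inverse d : dihedral d ->
  exists2 d', dihedral d' & (forall x, d' (d x) = x) /\ (forall x, d (d' x) = x).
Proof.
move=> [k [[] ->]].
  exists (Apow w k \o invz); first by exists k, true.
  by split => x /=; rewrite (invz_Apow w_order) invzK (ApowK w_order).
exists (Apow w (m.+1 * k)); first by exists (m.+1 * k)%N, false.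
by split => x /=; rewrite ?(ApowK w_order) ?(ApowVK w_order).
Qed.

Lemma dihedral_infty d : dihedral d -> d None = None \/ d None = Some 0.
Proof.
by move=> [k [[] ->]] /=; [right; rewrite invz_infty Apow_zero | left; rewrite Apow_infty].
Qed.

Lemma dihedral_in (G : set (S -> S)) :
  group_closed G -> G (Apow w 1) -> G invz -> dihedral `<=` G.
Proof.
move=> [G1 [Gc _]] GA GB d [k [b ->]].
have GApow j : G (Apow w j).
  elim: j => [|j IH]; first by rewrite (_ : Apow w 0 = id) //; apply: funext => x; rewrite Apow0.
  rewrite (_ : Apow w j.+1 = Apow w 1 \o Apow w j); first exact: Gc.
  by apply: funext => x /=; rewrite ApowD add1n.
by case: b; [apply: Gc | rewrite (_ : Apow w k \o id = Apow w k)].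
Qed.

Lemma Ti_invz y : Ti (invz y) = invz (Ti (Apow w 1 y)).
Proof.
have h : T (invz (Ti (Apow w 1 y))) = invz y.
  by rewrite T_invz TTi (invz_Apow w_order) (ApowK w_order).
by rewrite -h TiT.
Qed.

Lemma conj_Apow (X : S -> S) k x :
  Apow w k (Apow w (m.+1 * k) (X (Apow w (m.+1 * (m.+1 * k)) x))) = X (Apow w k x).
Proof. by rewrite (ApowK w_order) (Apow_eq _ (expw_oppK w_order k)). Qed.

Lemma T_dihedral b d : dihedral d ->
  exists2 d', dihedral d' & exists l, forall x, (if b then T else Ti) (d x) = d' (letter l x).
Proof.
move=> [k [[] ->]]; last first.
  exists (Apow w k); first by exists k, false.
  by exists (m.+1 * k, b)%N => x /=; rewrite letterE conj_Apow.
have invz_Apow' x : Apow w k (invz x) = invz (Apow w (m.+1 * k) x).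
  by rewrite (invz_Apow w_order) (Apow_eq _ (expw_oppK w_order k)).
case: b.
  exists (Apow w (1 + m.+1 * (m.+1 * k)) \o invz); first by exists (1 + m.+1 * (m.+1 * k))%N, true.
  exists (m.+1 * (m.+1 * k), true)%N => x /=; rewrite invz_Apow' T_invz letterE.
  by rewrite -[T (Apow w _ x)](conj_Apow T (m.+1 * k)) (invz_Apow w_order) ApowD.
set j := (1 + m.+1 * k)%N.
exists (Apow w (m.+1 * j) \o invz); first by exists (m.+1 * j)%N, true.
exists (m.+1 * j, false)%N => x /=; rewrite invz_Apow' Ti_invz ApowD letterE.
by rewrite -[Ti (Apow w _ x)](conj_Apow Ti j) (invz_Apow w_order).
Qed.

Lemma letter_dihedral l d : dihedral d ->
  exists2 d', dihedral d' & exists l', forall x, letter l (d x) = d' (letter l' x).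
Proof.
case: l => j b dd; have dd1 : dihedral (Apow w (m.+1 * j) \o d).
  by apply: dihedral_comp => //; exists (m.+1 * j)%N, false.
have [d2 dd2 [l' e]] := T_dihedral b dd1.
exists (Apow w j \o d2); first by apply: dihedral_comp => //; exists j, false.
by exists l' => x /=; rewrite letterE -e.
Qed.

Lemma word_dihedral s d : dihedral d ->
  exists2 d', dihedral d' & exists s', forall x, word s (d x) = d' (word s' x).
Proof.
elim: s d => [|l s IH] d dd; first by exists d => //; exists [::].
have [d1 dd1 [s1 e1]] := IH d dd.
have [d2 dd2 [l2 e2]] := letter_dihedral l dd1.
by exists d2 => //; exists (l2 :: s1) => x /=; rewrite e1 e2.
Qed.

Definition dihedral_words : set (S -> S) :=
  [set f | exists2 d, dihedral d & exists s, f = d \o word s].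

Lemma dihedral_words_group : group_closed dihedral_words.
Proof.
split; first by exists id; [exact: dihedral_id | exists [::]].
split.
  move=> _ _ [d1 dd1 [s1 ->]] [d2 dd2 [s2 ->]].
  have [d3 dd3 [s3 e3]] := word_dihedral s1 dd2.
  exists (d1 \o d3); first exact: dihedral_comp.
  by exists (s3 ++ s2); apply: funext => x /=; rewrite e3 word_cat.
move=> _ g [d dd [s ->]] gf fg.
have [d' dd' [d'd dd'x]] := dihedral_inverse dd.
have [d3 dd3 [s3 e3]] := word_dihedral (word_inv s) dd'.
exists d3 => //; exists s3; apply: funext => x /=.
rewrite -e3 -[in LHS](dd'x x) -[in LHS](wordK w_order TTi TiT s (d' x)).
by have := congr1 (fun h => h (word (word_inv s) (d' x))) gf.
Qed.

Definition Gam : set (S -> S) := gen (fun f => exists j : 'I_n, f = letter ((j : nat), true)).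

Lemma letter_in_Gam l : Gam (letter l).
Proof.
have Gen j : Gam (letter (j, true)).
  have -> : letter (j, true) = letter (letter_mod m (j, true)).
    by apply: funext => x; rewrite (letter_modE w_order).
  by apply: gen_in; exists (Ordinal (ltn_pmod j (isT : (0 < n)%N))).
case: l => j []; first exact: Gen.
have [_ [_ Ginv]] := gen_group (fun f => exists j : 'I_n, f = letter ((j : nat), true)).
apply: (Ginv (letter (j, true))); first exact: Gen.
  by apply: funext => x /=; have := letterK w_order TTi TiT (j, false) x.
by apply: funext => x /=; have := letterK w_order TTi TiT (j, true) x.
Qed.

Lemma word_in_Gam s : Gam (word s).
Proof.
have [G1 [Gc _]] := gen_group (fun f => exists j : 'I_n, f = letter ((j : nat), true)).
by elim: s => //= l s IH; apply: Gc => //; exact: letter_in_Gam.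
Qed.

Lemma Gam_word f : Gam f -> exists s, f = word s.
Proof.
move=> Gf; apply: (@gen_min _ _ (fun f => exists s, f = word s) _ _ f Gf).
  by move=> g [j ->]; exists [:: ((j : nat), true)]; apply: funext.
split; first by exists [::].
split.
  by move=> f1 f2 [s1 ->] [s2 ->]; exists (s1 ++ s2); apply: funext => x; rewrite word_cat.
move=> f1 g [s ->] gf fg; exists (word_inv s); apply: funext => x.
rewrite -[in LHS](wordK w_order TTi TiT s x).
by have := congr1 (fun h => h (word (word_inv s) x)) gf.
Qed.

(* The elements of D_n, indexed by 'I_(2n): A^i for i < n, A^(i-n) B otherwise. *)
Definition coset_rep (i : 'I_(2 * n)) : S -> S :=
  if ((i : nat) < n)%N then Apow w i else Apow w ((i : nat) - n) \o invz.

Lemma coset_rep_dihedral i : dihedral (coset_rep i).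
Proof. by rewrite /coset_rep; case: ifP => _; [exists (i : nat), false | exists ((i : nat) - n)%N, true]. Qed.

End NormalForm.

Section Index.
Variable R : realType.
Local Notation C := (R[i]).
Local Notation S := (sphere R).
Variables (m : nat) (w : C).
Local Notation n := m.+2.
Hypothesis w_order : w ^+ n = 1.
Hypothesis w_pow_inj : forall a b, (a < n)%N -> (b < n)%N -> w ^+ a = w ^+ b -> a = b.
Variables T Ti : S -> S.
Hypothesis TTi : forall x, T (Ti x) = x.
Hypothesis TiT : forall x, Ti (T x) = x.
Hypothesis T_invz : forall x, T (invz x) = Apow w 1 (invz (T x)).
Variables D1 D2 : set S.
Hypothesis D1_free : forall k, Apow w k <> id -> Apow w k @` D1 `&` D1 = set0.
Hypothesis D2_free : forall k, Apow w k <> id -> Apow w k @` D2 `&` D2 = set0.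
Hypothesis D12_disjoint : forall k, Apow w k @` D1 `&` D2 = set0.
Hypothesis T_into_D2 : forall y, ~ D1 y -> D2 (T y).
Local Notation word := (word m w T Ti).
Local Notation Gam := (Gam m w T Ti).
Local Notation dihedral := (dihedral w).
Local Notation coset_rep := (@coset_rep R m w).
Local Notation word_trivial :=
  (word_trivial w_order w_pow_inj TTi TiT D1_free D2_free D12_disjoint T_into_D2).

(* The 2n elements of D_n are distinct: compare their values at infinity and 1. *)
Lemma coset_rep_inj i i' : (forall x, coset_rep i x = coset_rep i' x) -> i = i'.
Proof.
move=> h; apply: val_inj => /=; move: (h None) (h (Some 1)); rewrite /coset_rep.
have below_n (k : 'I_(2 * n)) : ~~ ((k : nat) < n)%N -> ((k : nat) - n < n)%N.
  by have := ltn_ord k; rewrite -leqNgt; lia.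
case: ifP => ilt; case: ifP => i'lt /=;
  rewrite ?invz_infty ?Apow_infty ?Apow_zero ?invzE ?oner_eq0 ?invr1 ?ApowE ?mulr1 //.
  by move=> _ [/w_pow_inj]; apply.
move=> _ [/(w_pow_inj (below_n _ (negbT ilt)) (below_n _ (negbT i'lt)))].
by move/negbT: ilt; move/negbT: i'lt; rewrite -!leqNgt; lia.
Qed.

(* Distinct elements of D_n lie in distinct cosets of Gamma, by ping-pong. *)
Lemma coset_rep_unique i i' s s' :
  (forall x, coset_rep i (word s x) = coset_rep i' (word s' x)) -> i = i'.
Proof.
move=> e; apply: coset_rep_inj => y.
have [d' dd' [h1 h2]] := dihedral_inverse w_order (coset_rep_dihedral w i').
have E x : word (s' ++ word_inv s) x = d' (coset_rep i x).
  by rewrite word_cat -[in RHS](wordK w_order TTi TiT s x) e h1.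
have triv : forall x, word (s' ++ word_inv s) x = x.
  apply: word_trivial; rewrite E.
  exact: (dihedral_infty (d := d' \o coset_rep i) (dihedral_comp w_order dd' (coset_rep_dihedral w i))).
by rewrite -[LHS]h2 -E triv.
Qed.

Lemma Gam_index (K : set (S -> S)) :
  K `<=` dihedral_words m w T Ti -> dihedral `<=` K -> has_index K Gam (2 * n).
Proof.
move=> K_dw dK; exists coset_rep; split; first by move=> i; apply: dK; apply: (coset_rep_dihedral w).
move=> k /K_dw [_ [a [b ->]] [s ->]].
have ib : ((if b then n + a %% n else a %% n) < 2 * n)%N.
  by have := ltn_pmod a (isT : (0 < n)%N); case: (b); lia.
have ek : (Apow w a \o (if b then invz else id)) \o word s = coset_rep (Ordinal ib) \o word s.
  apply: funext => x; rewrite /coset_rep /=.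
  have am : (a %% n < n)%N := ltn_pmod a (isT : (0 < n)%N).
  case: b ib => ib /=; last by rewrite am; apply: Apow_eq; exact: (expw_modn w_order).
  by rewrite ltnNge leq_addr /= addKn; apply: Apow_eq; exact: (expw_modn w_order).
exists (Ordinal ib); split; first by exists (word s); split => //; exact: (word_in_Gam w_order TTi TiT).
move=> i' [_ [/(Gam_word w_order TTi TiT) [s' ->] e']].
by apply: (coset_rep_unique (s := s) (s' := s')) => x; rewrite -[LHS]/((_ \o _) x) -ek e'.
Qed.

(* Gamma is not normal: B T B^-1 = A^-1 T, and A^-1 = (A^-1 T) T^-1 would be
   a nontrivial word of Gamma fixing infinity. *)
Lemma Gam_not_normal (K : set (S -> S)) : K invz -> ~ normal_in K Gam.
Proof.
move=> KB hn.
have GT : Gam T.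
  have e : letter m w T Ti (0, true)%N = T.
    by apply: funext => x; rewrite letterE muln0 !Apow0.
  by rewrite -[X in _ X]e; exact: (letter_in_Gam w_order TTi TiT).
have [_ [/(Gam_word w_order TTi TiT) [s ->] e]] := hn invz T KB GT.
have BTB y : word s y = Apow w m.+1 (T y).
  have := congr1 (fun f => f (invz y)) e; rewrite /= invzK => <-.
  by rewrite T_invz (invz_Apow w_order) invzK muln1.
have Ainv_word x : word (s ++ [:: (0, false)%N]) x = Apow w m.+1 x.
  by rewrite word_cat /= letterE muln0 !Apow0 BTB TTi.
have := word_trivial (s := s ++ [:: (0, false)%N]).
rewrite Ainv_word Apow_infty => /(_ (or_introl erefl) (Some 1)).
rewrite Ainv_word ApowE mulr1 => -[] /eqP; rewrite -(expr0 w) => /eqP /w_pow_inj.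
by move=> /(_ (ltnSn _) isT).
Qed.

End Index.

Section RootOfUnity.
Variable R : realType.
Local Notation C := (R[i]).

Definition expi (x : R) : C := Complex (cos x) (sin x).

Lemma expiD x y : expi x * expi y = expi (x + y).
Proof. by rewrite /expi /= cosD sinD; congr Complex; lra. Qed.

Lemma expi0 : expi 0 = 1.
Proof. by rewrite /expi cos0 sin0. Qed.

Lemma expi_pow x k : expi x ^+ k = expi (k%:R * x).
Proof.
elim: k => [|k IH]; first by rewrite expr0 mul0r expi0.
by rewrite exprS IH expiD -{1}(mul1r x) -mulrDl -natr1 addrC.
Qed.

Lemma sqmod_expi x : sqmod (expi x) = 1.
Proof. by rewrite /sqmod /expi /= cos2Dsin2. Qed.

Lemma expi_neq0 x : expi x != 0.
Proof.
apply/eqP => e; have := sqmod_expi x; rewrite e /sqmod /= expr0n /= addr0.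
by move/eqP; rewrite eq_sym oner_eq0.
Qed.

(* e^(ix) = 1 has no solution in ]0, 2 pi[, since sin x = 0 forces x = pi. *)
Lemma expi_neq1 x : 0 < x < pi *+ 2 -> expi x != 1.
Proof.
move=> /andP[x0 x2]; apply/eqP => -[c1 s0].
have pi0 := pi_gt0 R.
have [xl|xg] := ltP x pi.
  by have := sin_gt0_pi (x:=x); rewrite x0 xl s0 ltxx => /(_ isT).
have h : sin (x - pi) = - sin x by rewrite sinB cospi sinpi; lra.
suff : 0 < x - pi < pi by move/sin_gt0_pi; rewrite h s0 oppr0 ltxx.
have xp : x != pi by apply/eqP => hp; move: c1; rewrite hp cospi; lra.
rewrite mulr2n in x2; apply/andP; split; last by lra.
by rewrite subr_gt0 lt_neqAle eq_sym xp xg.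
Qed.

Section Primitive.
Variable m : nat.
Local Notation n := m.+2.
Local Notation theta := (2 * pi / n%:R : R).

Lemma expi_root : expi theta ^+ n = 1.
Proof.
rewrite expi_pow (_ : n%:R * theta = pi *+ 2); first by rewrite /expi cos2pi sin2pi.
by rewrite mulr2n; field.
Qed.

Lemma expi_pow_neq1 k : (0 < k < n)%N -> expi theta ^+ k != 1.
Proof.
move=> /andP[k0 kn]; rewrite expi_pow; apply: expi_neq1.
have pi0 := pi_gt0 R.
have th0 : 0 < theta by apply: divr_gt0 => //; rewrite mulr_gt0 // ltr0n.
apply/andP; split; first by rewrite mulr_gt0 // ltr0n.
have -> : pi *+ 2 = n%:R * theta by rewrite mulr2n; field.
by rewrite ltr_pM2r // ltr_nat.
Qed.

Lemma expi_pow_inj a b : (a < n)%N -> (b < n)%N -> expi theta ^+ a = expi theta ^+ b -> a = b.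
Proof.
wlog ab : a b / (a <= b)%N.
  move=> H an bn e; case: (leqP a b) => [ab|ba]; first exact: H.
  by apply/esym/H => //; exact: ltnW.
move=> an bn e; case: (ltngtP a b) => [lt|lt|//]; last by move: ab; rewrite leqNgt lt.
have : expi theta ^+ (b - a) = 1.
  apply: (mulfI (expf_neq0 a (expi_neq0 theta))).
  by rewrite -exprD subnKC ?e ?mulr1 //; exact: ltnW.
by move/eqP; rewrite (negPf (expi_pow_neq1 _)) //; apply/andP; split; lia.
Qed.

End Primitive.
End RootOfUnity.

Section StereoRotation.
Variable R : realType.
Local Notation C := (R[i]).

Definition rot3 (c s : R) (p : R * R * R) : R * R * R :=
  ((c * p.1.1 - s * p.1.2, s * p.1.1 + c * p.1.2), p.2).

Lemma continuous_pair (T U V : topologicalType) (f : T -> U) (g : T -> V) :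
  continuous f -> continuous g -> continuous (fun q => (f q, g q)).
Proof. by move=> hf hg q; exact: (cvg_pair (hf q) (hg q)). Qed.

Lemma rot3_continuous c s : continuous (rot3 c s).
Proof.
have c11 : continuous (fun p : R * R * R => p.1.1).
  by move=> p; apply: (@cvg_comp _ _ _ fst fst); [exact: cvg_fst | exact: cvg_fst].
have c12 : continuous (fun p : R * R * R => p.1.2).
  by move=> p; apply: (@cvg_comp _ _ _ fst snd); [exact: cvg_fst | exact: cvg_snd].
apply: continuous_pair; last by move=> p; exact: cvg_snd.
apply: continuous_pair => q.
  by apply: cvgB; apply: cvgM; try exact: cvg_cst; [exact: c11 | exact: c12].
by apply: cvgD; apply: cvgM; try exact: cvg_cst; [exact: c11 | exact: c12].
Qed.

Lemma stereo_rot (u : C) z : sqmod u = 1 ->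
  stereo (rot u z) = rot3 (complex.Re u) (complex.Im u) (stereo z).
Proof.
case: u => a b; rewrite /sqmod /= => hu.
case: z => [[c d]|]; last by rewrite rot_infty /rot3 /= !mulr0 subr0 addr0.
rewrite rotE /stereo /sqmod /=.
have -> : (a * c - b * d) ^+ 2 + (a * d + b * c) ^+ 2 = c ^+ 2 + d ^+ 2.
  transitivity ((a ^+ 2 + b ^+ 2) * (c ^+ 2 + d ^+ 2)); first by ring.
  by rewrite hu mul1r.
by rewrite /rot3 /=; congr (_, _, _); ring.
Qed.

Lemma disc_param_rot (u : C) h : sqmod u = 1 -> disc_param h -> disc_param (rot u \o h).
Proof.
move=> hu [hc hi]; split.
  have -> : @stereo R \o (rot u \o h) = rot3 (complex.Re u) (complex.Im u) \o (@stereo R \o h).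
    by apply: funext => p /=; rewrite stereo_rot.
  by move=> x; apply: (continuous_comp (hc x)); exact: rot3_continuous.
have u0 : u != 0.
  by apply/eqP => u0; move: hu; rewrite u0 /sqmod /= expr0n /= addr0 => /eqP; rewrite eq_sym oner_eq0.
by move=> x y xin yin /= /(rot_inj u0) e; apply: hi.
Qed.

End StereoRotation.

Section CaseA.
Variables (R : realType) (m : nat) (T Ti : sphere R -> sphere R).
Variables (h1 h2 : R * R -> sphere R).
Local Notation S := (sphere R).
Local Notation n := m.+2.
Local Notation theta := (2 * pi / n%:R : R).
Local Notation w := (expi theta).
Local Notation w_order := (expi_root R m).
Local Notation w_pow_inj := (@expi_pow_inj R m).
Local Notation A := (rotm theta).
Local Notation Ainv := (rotm (- theta)).
Local Notation B := (@invz R).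
Local Notation Dn := (gen [set A; B]).
Local Notation K := (gen [set A; B; T]).
Local Notation Gamma := (gen (fun f => exists j : 'I_n, f = iter j A \o T \o iter j Ainv)).
Local Notation D1 := (disc_of h1).
Local Notation D2 := (disc_of h2).
Hypothesis TTi : forall x, T (Ti x) = x.
Hypothesis TiT : forall x, Ti (T x) = x.
Hypothesis T_loxodromic : loxodromic T.
Hypothesis TB : T \o B = (A \o B) \o T.
Hypothesis K_kleinian : kleinian K.
Hypotheses (h1_disc : disc_param h1) (h2_disc : disc_param h2).
Hypothesis D12_Dn : forall h, Dn h -> h @` D1 `&` D2 = set0.
Hypothesis D1_prec : precisely_invariant D1 (gen [set B]) Dn.
Hypothesis D2_prec : precisely_invariant D2 (gen [set A \o B]) Dn.
Hypothesis T_boundary : T @` disc_boundary h1 = disc_boundary h2.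
Hypothesis T_exterior : T @` (~` D1) = disc_interior h2.

Lemma A_Apow : A = Apow w 1.
Proof. by []. Qed.

Lemma iter_A j : iter j A = Apow w j.
Proof. exact: iter_rot. Qed.

Lemma iter_Ainv j : iter j Ainv = Apow w (m.+1 * j).
Proof.
rewrite /Apow exprM -(iter_rot _ j); congr (iter j (rot _)).
apply: (mulIf (expi_neq0 theta)); rewrite -exprSr w_order expiD addNr.
exact: expi0.
Qed.

Lemma T_invz x : T (invz x) = Apow w 1 (invz (T x)).
Proof. exact: (congr1 (fun f => f x) TB). Qed.

Lemma Dn_Apow k : Dn (Apow w k).
Proof.
by apply: (dihedral_in (gen_group _)); [apply: gen_in; left | apply: gen_in; right | exists k, false].
Qed.

Lemma rotation_free_disc (D : set S) (F : S -> S) :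
  (forall x, F (F x) = x) -> F None <> None -> precisely_invariant D (gen [set F]) Dn ->
  forall k, Apow w k <> id -> Apow w k @` D `&` D = set0.
Proof.
move=> FF Finf [_ Dprec] k nid; apply: Dprec; first exact: Dn_Apow.
move=> /(gen_min (Y := fun f => f = id \/ f = F) (fun f fF => or_intror fF) (involution_group FF)).
by case=> [/nid//|/(congr1 (fun f => f None))]; rewrite Apow_infty => /esym.
Qed.

Lemma AB_involution x : (A \o B) ((A \o B) x) = x.
Proof. by rewrite /= A_Apow (invz_Apow w_order) invzK (ApowK w_order). Qed.

Lemma D1_free k : Apow w k <> id -> Apow w k @` D1 `&` D1 = set0.
Proof. by apply: (rotation_free_disc (@invzK R) _ D1_prec); rewrite invz_infty. Qed.

Lemma D2_free k : Apow w k <> id -> Apow w k @` D2 `&` D2 = set0.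
Proof.
apply: (rotation_free_disc AB_involution _ D2_prec).
by rewrite /= invz_infty A_Apow Apow_zero.
Qed.

Lemma D12_disjoint k : Apow w k @` D1 `&` D2 = set0.
Proof. exact: D12_Dn (Dn_Apow k). Qed.

Lemma T_into_D2 y : ~ D1 y -> D2 (T y).
Proof.
move=> ny; have : (T @` (~` D1)) (T y) by exists y.
by rewrite T_exterior => -[p pin <-]; exists p => //; rewrite /cdisk /=; apply: ltW.
Qed.

Lemma generator_letter (j : nat) : iter j A \o T \o iter j Ainv = letter m w T Ti (j, true).
Proof. by rewrite iter_A iter_Ainv. Qed.

Lemma Gamma_Gam : Gamma = Gam m w T Ti.
Proof.
rewrite /Gam; congr gen; apply: funext => f; apply: propext.
by split => -[j ->]; exists j; rewrite generator_letter.
Qed.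

Lemma dihedral_in_K : dihedral w `<=` K.
Proof. by apply: (dihedral_in (gen_group _)); apply: gen_in; [left; left | left; right]. Qed.

Lemma K_dihedral_words : K `<=` dihedral_words m w T Ti.
Proof.
apply: gen_min; last exact: (dihedral_words_group w_order TTi TiT T_invz).
move=> f [[->|->]|->].
- by exists A; [exists 1%N, false | exists [::]].
- exists B; last by exists [::].
  by exists 0%N, true; apply: funext => x /=; rewrite Apow0.
- exists id; first exact: (dihedral_id w).
  by exists [:: (0, true)%N]; apply: funext => x; rewrite /= letterE muln0 !Apow0.
Qed.

Lemma Gamma_sub_K : Gamma `<=` K.
Proof.
have [_ [Kc _]] := gen_group [set A; B; T].
rewrite Gamma_Gam; apply: gen_min; last exact: gen_group.
move=> _ [j ->].
apply: (Kc); [apply: (Kc)|]; first by apply: dihedral_in_K; exists (j : nat), false.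
  by apply: gen_in; right.
by apply: dihedral_in_K; exists (m.+1 * j)%N, false.
Qed.

Lemma expw_inverse (i : nat) : w ^+ i * w ^+ (m.+1 * i) = 1.
Proof. by rewrite -exprD (_ : (i + m.+1 * i = i * n + 0)%N) ?(expw_mod w_order) //; lia. Qed.

(* Each generator g_i is conjugate to T by a rotation. *)
Lemma generator_loxodromic i : loxodromic (iter i A \o T \o iter i Ainv).
Proof. by rewrite iter_A iter_Ainv /Apow; apply: loxodromic_rot_conj => //; exact: expw_inverse. Qed.

Lemma disc_A (i : nat) (b : bool) :
  disc_of (iter i A \o (if b then h2 else h1)) = letter_disc w D1 D2 (i, b).
Proof. by rewrite /disc_of iter_A -image_comp; case: b. Qed.

Lemma A_discs_disjoint (i j : 'I_n) (b b' : bool) x :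
  letter_disc w D1 D2 ((i : nat), b) x -> letter_disc w D1 D2 ((j : nat), b') x ->
  i = j /\ b = b'.
Proof.
move=> X1 X2.
have := @letter_disc_disjoint _ _ _ w_order w_pow_inj _ _ D1_free D2_free D12_disjoint
  ((i : nat), b) ((j : nat), b') x (ltn_ord i) (ltn_ord j) X1 X2.
by move=> [] /val_inj -> ->.
Qed.

Lemma generator_boundary (i : 'I_n) :
  (iter i A \o T \o iter i Ainv) @` disc_boundary (iter i A \o h1) =
  disc_boundary (iter i A \o h2).
Proof.
rewrite /disc_boundary iter_A iter_Ainv image_comp.
rewrite (eq_imagel (f' := Apow w i \o (T \o h1))); last by move=> p _ /=; rewrite (ApowVK w_order).
by rewrite -image_comp -image_comp T_boundary image_comp.
Qed.

Lemma generator_exterior (i : 'I_n) (x : S) :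
  (forall (j : 'I_n) b, ~ letter_disc w D1 D2 ((j : nat), b) x) ->
  letter_disc w D1 D2 ((i : nat), true) ((iter i A \o T \o iter i Ainv) x).
Proof.
move=> hx; rewrite generator_letter.
by apply: (letter_into_disc w_order TTi T_into_D2 (l := ((i : nat), true))); apply: hx.
Qed.

Lemma Gamma_schottky : schottky Gamma n.
Proof.
split; first exact: kleinian_sub Gamma_sub_K K_kleinian.
exists (fun i : 'I_n => iter i A \o T \o iter i Ainv), (fun i => iter i A \o h1), (fun i => iter i A \o h2).
split; first by [].
split; first exact: generator_loxodromic.
split.
  by move=> i; rewrite iter_A; split; apply: disc_param_rot => //; rewrite expi_pow sqmod_expi.
split.
  move=> i j ij; rewrite -subset0 => x [].
  rewrite !(disc_A _ false) => /A_discs_disjoint X1 /X1 [eij _].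
  by move: ij; rewrite eij eqxx.
split.
  move=> i j ij; rewrite -subset0 => x [].
  rewrite !(disc_A _ true) => /A_discs_disjoint X1 /X1 [eij _].
  by move: ij; rewrite eij eqxx.
split.
  move=> i j; rewrite -subset0 => x [].
  by rewrite (disc_A _ false) (disc_A _ true) => /A_discs_disjoint X1 /X1 [].
move=> E; split; first exact: generator_boundary.
move=> i; rewrite -subset0 => _ [[x Ex <-] Ey]; apply: Ey.
exists i => //; right; rewrite (disc_A _ true); apply: generator_exterior => j b Dx; apply: Ex.
by exists j => //; case: b Dx => Dx; [right; rewrite (disc_A _ true) | left; rewrite (disc_A _ false)].
Qed.

Lemma caseA_Gamma : schottky Gamma n /\ has_index K Gamma (2 * n) /\ ~ normal_in K Gamma.
Proof.
split; first exact: Gamma_schottky.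
have KB : K B by apply: gen_in; left; right.
rewrite Gamma_Gam; split.
  exact: (Gam_index w_order w_pow_inj TTi TiT D1_free D2_free D12_disjoint T_into_D2
    K_dihedral_words dihedral_in_K).
exact: (Gam_not_normal w_order w_pow_inj TTi TiT T_invz D1_free D2_free D12_disjoint
  T_into_D2 KB).
Qed.

End CaseA.

Unset Implicit Arguments.

Theorem mainTheorem9 (R : realType) (n : nat) (T : sphere R -> sphere R)
  (h1 h2 : R * R -> sphere R) :
  (2 <= n)%N -> ~~ odd n ->
  let A : sphere R -> sphere R := rotm (2 * pi / n%:R) in
  let Ainv : sphere R -> sphere R := rotm (- (2 * pi / n%:R)) in
  let B : sphere R -> sphere R := invz in
  let Dn := gen [set A; B] in
  let K := gen [set A; B; T] in
  is_mobius T -> loxodromic T -> T \o B = (A \o B) \o T ->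
  kleinian K ->
  disc_param h1 -> disc_param h2 ->
  (forall h, Dn h -> h @` disc_of h1 `&` disc_of h2 = set0) ->
  precisely_invariant (disc_of h1) (gen [set B]) Dn ->
  precisely_invariant (disc_of h2) (gen [set A \o B]) Dn ->
  T @` disc_boundary h1 = disc_boundary h2 ->
  T @` (~` disc_of h1) = disc_interior h2 ->
  let Gamma := gen (fun f => exists j : 'I_n, f = iter j A \o T \o iter j Ainv) in
  schottky Gamma n /\ has_index K Gamma (2 * n) /\ ~ normal_in K Gamma.
Proof.
move=> n_ge2 _; have [m ->] : exists m, n = m.+2 by exists n.-2; lia.
move=> A Ainv B Dn K _ T_lox TB K_kleinian h1_disc h2_disc D12_Dn D1_prec D2_prec
  T_boundary T_exterior Gamma.
have [Ti TTi TiT] := loxodromic_inverse T_lox.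
exact: (caseA_Gamma TTi TiT T_lox TB K_kleinian h1_disc h2_disc D12_Dn D1_prec D2_prec
  T_boundary T_exterior).
Qed.
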